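(* In the fixed-flow two-parallel-path setting with $l_{P_1}<l_{P_2}$, for every integer $t\ge L$ we have $r_{ss_1}(t+1)>r_{\min}(t)$. More precisely, $r_{ss_1}(t+1)=r_{\min}(t)\gamma_s(t)$ with $$\gamma_s(t)=\frac{a(t)p_{ss_2}(t)+a(t)f_{ss_2}(t)+(1-l_{P_1})\,\beta(t)\,b_{d_2d}(t-n+1)}{p_{ss_2}(t)+f_{ss_2}(t)+(1-l_{P_2})\,b_{d_2d}(t-n+1)}>1,$$ where $a(t)=r_{ss_1}(t)/r_{\min}(t)\ge1$ and $\beta(t)=\dfrac{b_{d_1d}(t-m+1)}{b_{d_2d}(t-n+1)\,r_{\min}(t)}\ge1$.
   Context: Model (linear decision rule). Directed graph $G=(V,E)$, source $s$, destination $d$, discrete time; pheromone $p_{uv}(t)$, forward flows $f_v(t)$, backward flows $b_v(t)$; leakages $l_v\in[0,1]$; decay $\delta\in(0,1)$; exogenous inputs $f_s(t),b_d(t)$. Edge flows: $f_{uv}(t)=f_u(t)p_{uv}(t)/\sum_{z:(u,z)\in E}p_{uz}(t)$, $b_{uv}(t)=b_v(t)p_{uv}(t)/\sum_{z:(z,v)\in E}p_{zv}(t)$ (at a vertex with a single outgoing, resp. incoming, edge the whole flow goes along it). Updates: $f_v(t+1)=(1-l_v)\sum_{z:(z,v)\in E}f_{zv}(t)$ for $v\neq s$, $b_u(t+1)=(1-l_u)\sum_{z:(u,z)\in E}b_{uz}(t)$ for $u\ne d$, $p_{uv}(t+1)=\delta(p_{uv}(t)+f_{uv}(t)+b_{uv}(t))$.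 Path leakage $l_P=1-\prod_{v\in P\setminus\{s,d\}}(1-l_v)$. Two parallel paths: $G$ is the union of directed paths $P_1,P_2$ from $s$ to $d$ sharing only $s,d$; $s_1,s_2$ are the successors of $s$ and $d_1,d_2$ the predecessors of $d$ on $P_1,P_2$; $m=\mathrm{len}(P_1)$, $n=\mathrm{len}(P_2)$ (numbers of edges), $L=\max(m,n)$. Potential: $r_{ss_1}(t)=p_{ss_1}(t)/p_{ss_2}(t)$, $r_{d_1d}(t)=p_{d_1d}(t)/p_{d_2d}(t)$, and for $t\ge L$, $r_{\min}(t)=\min\{r_{ss_1}(t-i),\,r_{d_1d}(t-i):0\le i\le L-1\}$. Fixed-flow setting: $f_s(t)=\bar f>0$ and $b_d(t)=\bar b>0$ for all $t$, and all initial pheromone levels $p_{uv}(0)$ are positive. *)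

From HB Require Import structures.
From mathcomp Require Import all_boot all_order all_algebra.
Set Implicit Arguments. Unset Strict Implicit. Unset Printing Implicit Defensive.
Import Order.TTheory GRing.Theory Num.Theory.
Local Open Scope ring_scope.

Section Model.
Variables (R : realFieldType) (V : finType) (E : rel V) (s d : V).
Variables (l : V -> R) (delta : R) (fs bd : nat -> R).

Record state := State { pher : V -> V -> R; fflow : V -> R; bflow : V -> R }.

Definition fedge (S : state) (u v : V) : R :=
  fflow S u * pher S u v / \sum_(z | E u z) pher S u z.

Definition bedge (S : state) (u v : V) : R :=
  bflow S v * pher S u v / \sum_(z | E z v) pher S z v.

Definition step (t : nat) (S : state) : state :=
  State (fun u v => delta * (pher S u v + fedge S u v + bedge S u v))
        (fun v => if v == s then fs t.+1
                  else (1 - l v) * \sum_(z | E z v) fedge S z v)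
        (fun u => if u == d then bd t.+1
                  else (1 - l u) * \sum_(z | E u z) bedge S u z).

Variables (p0 : V -> V -> R) (f0 b0 : V -> R).

Definition init : state :=
  State p0 (fun v => if v == s then fs 0 else f0 v)
           (fun u => if u == d then bd 0 else b0 u).

Fixpoint traj (t : nat) : state :=
  match t with 0 => init | t'.+1 => step t' (traj t') end.

End Model.

Definition edges_of (T : eqType) (P : seq T) : seq (T * T) := zip P (behead P).

(* G is the union of the directed paths P1 = s :: q1 ++ [d] and P2 = s :: q2 ++ [d]
   (q1, q2 = internal vertices), sharing only s and d. *)
Definition two_parallel_paths (V : finType) (E : rel V) (s d : V) (q1 q2 : seq V) : Prop :=
  [/\ uniq (s :: d :: q1 ++ q2),
      (0 < size q1 + size q2)%N,
      (forall v : V, v \in s :: d :: q1 ++ q2) &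
      (forall u v : V, E u v = ((u, v) \in edges_of (s :: rcons q1 d))
                            || ((u, v) \in edges_of (s :: rcons q2 d)))].

Definition path_leak (R : pzRingType) (V : Type) (l : V -> R) (q : seq V) : R :=
  1 - \prod_(v <- q) (1 - l v).

Definition rmin_window (R : realFieldType) (r1 r2 : nat -> R) (L t : nat) : R :=
  \big[Order.min/r1 t]_(i < L) Order.min (r1 (t - i)%N) (r2 (t - i)%N).

From HB Require Import structures.
From mathcomp Require Import all_boot all_order all_algebra.
From mathcomp Require Import ring lra zify.
Import Order.TTheory GRing.Theory Num.Theory.
Set Implicit Arguments. Unset Strict Implicit. Unset Printing Implicit Defensive.
Local Open Scope ring_scope.

(* The pheromone ratio at the source evolves by
     r_ss1(t+1) = (p1 + f1 + b_ss1(t)) / (p2 + f2 + b_ss2(t)),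
   where the forward flows split like the pheromones (f1 = (p1/p2) f2) and the
   backward flow b_ss_i(t) is the flow that entered d along path P_i exactly
   len(P_i) - 1 steps earlier, damped by the survival factor 1 - l_{P_i}.
   Writing r = r_min(t), a = (p1/p2)/r >= 1 and beta = B1/(B2 r) >= 1 (the
   latter because r bounds the destination ratio over the whole window), the
   ratio factors as r * gamma, and gamma > 1 because 1 - l_{P1} > 1 - l_{P2}. *)

Section EdgesOfPaths.
Variable T : eqType.

Lemma mem_edges_of (P : seq T) (a b : T) :
  (a, b) \in edges_of P -> (a \in P) && (b \in behead P).
Proof.
elim: P => [|x [|y P] IH] // H.
have {H} : (a, b) \in (x, y) :: edges_of (y :: P) by [].
rewrite in_cons => /orP[/eqP[-> ->]|/IH/andP[aP bP]]; first by rewrite !inE !eqxx.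
rewrite in_cons; apply/andP; split; first by apply/orP; right.
exact: mem_behead bP.
Qed.

Lemma edges_of_from_head (x y : T) (P : seq T) (z : T) : x \notin y :: P ->
  ((x, z) \in edges_of [:: x, y & P]) = (z == y).
Proof.
move=> xP; have -> : edges_of [:: x, y & P] = (x, y) :: edges_of (y :: P) by [].
rewrite in_cons xpair_eqE eqxx /=.
case: ((x, z) \in _) / idP => [/mem_edges_of/andP[xyP _]|]; last by rewrite orbF.
by move: xP; rewrite xyP.
Qed.

Lemma edges_of_into_last (x y : T) (P : seq T) (z : T) : x \notin y :: P ->
  ((z, x) \in edges_of (rcons (y :: P) x)) = (z == last y P).
Proof.
elim: P y => [|y' P IH] y xP.
  by rewrite mem_seq1 xpair_eqE eqxx andbT.
have -> : edges_of (rcons [:: y, y' & P] x) = (y, y') :: edges_of (rcons (y' :: P) x).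
  by [].
have xy' : (x == y') = false.
  by apply/negbTE; apply: contra xP => /eqP ->; rewrite !inE eqxx orbT.
rewrite in_cons xpair_eqE xy' andbF /=; apply: IH.
by apply: contra xP; rewrite !inE => ->; rewrite orbT.
Qed.

Lemma last_head_rev (x : T) (q : seq T) : last x q = head x (rev q).
Proof. by case/lastP: q => // q y; rewrite rev_rcons last_rcons. Qed.

Lemma head_disjoint_neq (x : T) (q1 q2 : seq T) :
  x \notin q1 ++ q2 -> uniq (q1 ++ q2) -> (0 < size q1 + size q2)%N ->
  head x q1 != head x q2.
Proof.
case: q1 => [|y1 q1]; case: q2 => [|y2 q2] //= xq U _.
- by apply: contra xq => /eqP ->; rewrite mem_head.
- by apply: contra xq => /eqP <-; rewrite mem_head.
- case/andP: U => y1q _; apply: contra y1q => /eqP ->.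
  by rewrite mem_cat mem_head orbT.
Qed.
End EdgesOfPaths.

(* Along such a chain backward flow is merely relayed (Lemma [bedge_relay_path]). *)
Fixpoint relay_path (V : eqType) (E : rel V) (d u : V) (q : seq V) : Prop :=
  if q is v :: q' then
    [/\ v != d, forall z, E z v = (z == u), forall z, E v z = (z == head d q')
      & relay_path E d v q']
  else True.

Lemma relay_path_of_edges (V : eqType) (E F : rel V) (d u : V) (q : seq V) :
  uniq (u :: rcons q d) ->
  (forall a b, F a b -> (a \notin q) && (b \notin q)) ->
  (forall a b, E a b = ((a, b) \in edges_of (u :: rcons q d)) || F a b) ->
  relay_path E d u q.
Proof.
elim: q u F => [|v q IH] u F //= U Fout Edef.
have {U} [/andP[uv uq] /andP[vq U]] : (u != v) && (u \notin rcons q d)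
    /\ (v \notin rcons q d) && uniq (rcons q d).
  by move: U; rewrite /= in_cons negb_or => /andP[-> ->].
have Fv a b : F a b -> (a != v) && (b != v).
  by move/Fout; rewrite !in_cons !negb_or => /andP[/andP[-> _] /andP[-> _]].
have Eq a b : E a b = ((a, b) == (u, v))
    || ((a, b) \in edges_of (v :: rcons q d)) || F a b.
  by rewrite Edef.
split.
- by apply: contra vq => /eqP ->; rewrite mem_rcons mem_head.
- move=> z; rewrite Eq xpair_eqE eqxx andbT.
  case: ((z, v) \in _) / idP => [/mem_edges_of/andP[_ vP]|_].
    by rewrite vP in vq.
  by case Fzv: (F z v); rewrite ?orbF //; move/Fv: Fzv; rewrite eqxx andbF.
- move=> z; have hd : rcons q d = head d q :: behead (rcons q d) by case: (q).
  rewrite Eq xpair_eqE eq_sym (negbTE uv) /= hd edges_of_from_head -?hd //.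
  by case Fvz: (F v z); rewrite ?orbF //; move/Fv: Fvz; rewrite eqxx.
- apply: (IH v (fun a b => ((a, b) == (u, v)) || F a b)) => //.
  + by rewrite /= vq U.
  + move=> a b /orP[/eqP[-> ->]|/Fout]; last first.
      by rewrite !in_cons !negb_or => /andP[/andP[_ ->] /andP[_ ->]].
    apply/andP; split; [apply: contra uq | apply: contra vq] => H.
    * by rewrite mem_rcons in_cons H orbT.
    * by rewrite mem_rcons in_cons H orbT.
  + by move=> a b; rewrite Eq; case: (_ == _); rewrite ?orbT.
Qed.

Section TwoParallelPaths.
Variables (V : finType) (E : rel V) (s d : V) (q1 q2 : seq V).
Hypothesis HG : two_parallel_paths E s d q1 q2.

Lemma tpp_sym : two_parallel_paths E s d q2 q1.
Proof.
case: HG => U S C Ed.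
have Hp : perm_eq (s :: d :: q1 ++ q2) (s :: d :: q2 ++ q1).
  by rewrite !perm_cons perm_catC.
split.
- by rewrite -(perm_uniq Hp).
- by rewrite addnC.
- by move=> v; rewrite -(perm_mem Hp).
- by move=> u v; rewrite Ed orbC.
Qed.

Lemma tpp_distinct :
  [/\ s \notin d :: q1 ++ q2, d \notin q1 ++ q2 & uniq (q1 ++ q2)].
Proof. by case: HG; rewrite /= => /and3P[]. Qed.

Lemma tpp_uniq_path : uniq (s :: rcons q1 d).
Proof.
case: tpp_distinct; rewrite !in_cons !mem_cat !negb_or.
move=> /and3P[sd sq1 _] /andP[dq1 _]; rewrite cat_uniq => /andP[U1 _].
by rewrite /= mem_rcons in_cons negb_or sd sq1 rcons_uniq dq1 U1.
Qed.

Lemma tpp_source_succ z : E s z = (z == head d q1) || (z == head d q2).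
Proof.
have sP q : s \notin rcons q d ->
    ((s, z) \in edges_of (s :: rcons q d)) = (z == head d q).
  by case: q => [|y q] sq; rewrite edges_of_from_head.
case: HG => _ _ _ ->; case: tpp_distinct; rewrite !in_cons !mem_cat !negb_or.
move=> /and3P[sd sq1 sq2] _ _.
by rewrite !sP // mem_rcons in_cons negb_or sd ?sq1 ?sq2.
Qed.

Lemma tpp_dest_pred z : E z d = (z == last s q1) || (z == last s q2).
Proof.
case: HG => _ _ _ ->; case: tpp_distinct; rewrite !in_cons !mem_cat !negb_or.
move=> /and3P[sd _ _] /andP[dq1 dq2] _.
by rewrite !edges_of_into_last // in_cons negb_or eq_sym sd.
Qed.

Lemma tpp_lasts_neq : last s q1 != last s q2.
Proof.
case: tpp_distinct; rewrite in_cons negb_or => /andP[_ sq] _ U.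
rewrite !last_head_rev; apply: head_disjoint_neq.
- by move: sq; rewrite !mem_cat !mem_rev.
- by rewrite -rev_cat rev_uniq uniq_catC.
- by rewrite !size_rev; case: HG.
Qed.

Lemma tpp_relay_path : relay_path E d s q1.
Proof.
apply: (@relay_path_of_edges _ _ (fun a b => (a, b) \in edges_of (s :: rcons q2 d))).
- exact: tpp_uniq_path.
- have out c : c \in s :: rcons q2 d -> c \notin q1.
    case: tpp_distinct; rewrite !in_cons !mem_cat !negb_or.
    move=> /and3P[_ sq1 _] /andP[dq1 _]; rewrite cat_uniq => /and3P[_ /hasPn dis _].
    rewrite mem_rcons !in_cons => /or3P[/eqP->|/eqP->|/dis] //.
  by move=> a b /mem_edges_of/andP[/out -> /mem_behead/out ->].
- by case: HG.
Qed.
End TwoParallelPaths.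

Section MinimumWindow.
Variables (R : realFieldType) (r1 r2 : nat -> R) (L t : nat).

Lemma rmin_window_le_head : rmin_window r1 r2 L t <= r1 t.
Proof. exact: bigmin_le_id. Qed.

Lemma rmin_window_le k :
  (k <= t)%N -> (t < k + L)%N -> rmin_window r1 r2 L t <= r2 k.
Proof.
move=> kt tkL; have iL : (t - k < L)%N by lia.
apply: le_trans (bigmin_le _ (Ordinal iL) _) _.
by rewrite /= subKn // ge_min lexx orbT.
Qed.

Lemma rmin_window_gt0 : (forall k, 0 < r1 k) -> (forall k, 0 < r2 k) ->
  0 < rmin_window r1 r2 L t.
Proof. by move=> r1p r2p; apply: lt_bigmin => // i _; rewrite lt_min r1p r2p. Qed.
End MinimumWindow.

(* This is the
   inequality [beta >= 1] for the backward flows entering [d]. *)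
Lemma share_ratio_bound (R : realFieldType) (b r a1 a2 c1 c2 : R) :
  0 <= b -> 0 < a1 -> 0 < a2 -> 0 < c1 -> 0 < c2 ->
  r <= a1 / a2 -> r <= c1 / c2 ->
  r * (b * c2 / (c1 + c2)) <= b * a1 / (a1 + a2).
Proof.
move=> b0 a1p a2p c1p c2p ra rc; rewrite -subr_ge0.
have -> : b * a1 / (a1 + a2) - r * (b * c2 / (c1 + c2)) =
    b * (a1 * (c1 - r * c2) + c2 * (a1 - r * a2)) / ((a1 + a2) * (c1 + c2)).
  by field; rewrite !gt_eqF ?addr_gt0.
apply: divr_ge0; last by rewrite ltW // mulr_gt0 ?addr_gt0.
rewrite mulr_ge0 // addr_ge0 // mulr_ge0 ?(ltW a1p) ?(ltW c2p) //.
- by rewrite subr_ge0 -ler_pdivlMr.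
- by rewrite subr_ge0 -ler_pdivlMr.
Qed.

Lemma ratio_decomposition (R : realFieldType) (r p1 p2 f2 B1 B2 Pi1 Pi2 : R) :
  0 < r -> 0 < p2 -> 0 <= f2 -> 0 < B2 -> 0 <= Pi2 -> Pi2 < Pi1 ->
  r <= p1 / p2 -> r * B2 <= B1 ->
  let a := p1 / p2 / r in let beta := B1 / (B2 * r) in
  let gamma := (a * p2 + a * f2 + Pi1 * beta * B2) / (p2 + f2 + Pi2 * B2) in
  let rho := (p1 + p1 / p2 * f2 + Pi1 * B1) / (p2 + f2 + Pi2 * B2) in
  [/\ r < rho, rho = r * gamma, 1 < gamma, 1 <= a & 1 <= beta].
Proof.
move=> rp p2p f2n B2p Pi2n Pi12 ra rB a beta gamma rho.
have a1 : 1 <= a by rewrite ler_pdivlMr // mul1r.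
have beta1 : 1 <= beta by rewrite ler_pdivlMr ?mulr_gt0 // mul1r mulrC.
have Dp : 0 < p2 + f2 + Pi2 * B2 by have := mulr_ge0 Pi2n (ltW B2p); lra.
have gamma1 : 1 < gamma.
  rewrite ltr_pdivlMr // mul1r.
  have h1 : p2 + f2 <= a * p2 + a * f2.
    by rewrite -mulrDr ler_peMl // addr_ge0 // ltW.
  have h2 : Pi2 * B2 < Pi1 * beta * B2.
    by rewrite ltr_pM2r // (lt_le_trans Pi12) // ler_peMr // (le_trans Pi2n) ?ltW.
  lra.
have rho_eq : rho = r * gamma.
  rewrite /rho /gamma /a /beta; field.
  by rewrite !gt_eqF.
by split=> //; rewrite rho_eq ltr_pMr.
Qed.

Lemma big_pred2 (R : nmodType) (V : finType) (P : pred V) (a b : V) (F : V -> R) :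
  a != b -> (forall z, P z = (z == a) || (z == b)) ->
  \sum_(z | P z) F z = F a + F b.
Proof.
move=> ab HP; rewrite (bigD1 a) ?HP ?eqxx //; congr (_ + _).
apply: big_pred1 => z /=; rewrite HP.
by case: (eqVneq z a) => [->|za] /=; rewrite ?eqxx ?andbF ?andbT // (negbTE ab).
Qed.

Section Dynamics.
Variables (R : realFieldType) (V : finType) (E : rel V) (s d : V).
Variables (l : V -> R) (delta : R) (fs bd : nat -> R).
Variables (p0 : V -> V -> R) (f0 b0 : V -> R).
Hypothesis l_le1 : forall v, l v <= 1.
Hypothesis delta_gt0 : 0 < delta.
Hypothesis fs_ge0 : forall k, 0 <= fs k.
Hypothesis bd_ge0 : forall k, 0 <= bd k.
Hypothesis p0_gt0 : forall u v, E u v -> 0 < p0 u v.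
Hypothesis f0_ge0 : forall v, 0 <= f0 v.
Hypothesis b0_ge0 : forall v, 0 <= b0 v.
Local Notation T := (traj E s d l delta fs bd p0 f0 b0).

Definition admissible (S : state R V) : Prop :=
  [/\ forall u v, E u v -> 0 < pher S u v,
      forall v, 0 <= fflow S v & forall v, 0 <= bflow S v].

Lemma fedge_ge0 (S : state R V) u v : admissible S -> E u v -> 0 <= fedge E S u v.
Proof.
case=> Sp Sf _ Euv; apply: divr_ge0; first by rewrite mulr_ge0 // ltW // Sp.
by apply: sumr_ge0 => z Ez; rewrite ltW // Sp.
Qed.

Lemma bedge_ge0 (S : state R V) u v : admissible S -> E u v -> 0 <= bedge E S u v.
Proof.
case=> Sp _ Sb Euv; apply: divr_ge0; first by rewrite mulr_ge0 // ltW // Sp.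
by apply: sumr_ge0 => z Ez; rewrite ltW // Sp.
Qed.

Lemma traj_admissible k : admissible (T k).
Proof.
have l1 v : 0 <= 1 - l v by rewrite subr_ge0.
elim: k => [|k IH].
  by split=> [//|v|v] /=; case: ifP.
split=> [u v Euv|v|v] /=.
- rewrite mulr_gt0 // -addrA ltr_wpDr ?addr_ge0 ?fedge_ge0 ?bedge_ge0 //.
  by case: IH => Sp _ _; apply: Sp.
- by case: ifP => _ //; rewrite mulr_ge0 // sumr_ge0 // => z; apply: fedge_ge0.
- by case: ifP => _ //; rewrite mulr_ge0 // sumr_ge0 // => z; apply: bedge_ge0.
Qed.

Lemma traj_pher_gt0 k u v : E u v -> 0 < pher (T k) u v.
Proof. by case: (traj_admissible k) => Sp _ _; apply: Sp. Qed.

Lemma bflow_dest k : bflow (T k) d = bd k.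
Proof. by case: k => [|k] /=; rewrite eqxx. Qed.

Lemma fedge_ratio (S : state R V) u v w :
  fedge E S u v * pher S u w = pher S u v * fedge E S u w.
Proof. by rewrite /fedge; ring. Qed.

Lemma bedge_sole_pred (S : state R V) u v :
  (forall z, E z v = (z == u)) -> pher S u v != 0 ->
  bedge E S u v = bflow S v.
Proof. by move=> Ev pS; rewrite /bedge (eq_bigl _ _ Ev) big_pred1_eq mulfK. Qed.

Lemma bedge_relay k u v w : v != d ->
  (forall z, E z v = (z == u)) -> (forall z, E v z = (z == w)) ->
  bedge E (T k.+1) u v = (1 - l v) * bedge E (T k) v w.
Proof.
move=> vd Ein Eout; rewrite bedge_sole_pred // ?gt_eqF ?traj_pher_gt0 ?Ein //=.
by rewrite (negbTE vd) (eq_bigl _ _ Eout) big_pred1_eq.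
Qed.

Lemma bedge_relay_path u q k : relay_path E d u q ->
  bedge E (T (k + size q)) u (head d q) =
  (\prod_(v <- q) (1 - l v)) * bedge E (T k) (last u q) d.
Proof.
elim: q u => [|v q IH] u /=; first by rewrite addn0 big_nil mul1r.
case=> vd Ein Eout Hq; rewrite addnS (bedge_relay _ vd Ein Eout) IH //.
by rewrite big_cons mulrA.
Qed.
End Dynamics.

Lemma path_survival (R : pzRingType) (V : Type) (l : V -> R) (q : seq V) :
  1 - path_leak l q = \prod_(v <- q) (1 - l v).
Proof. by rewrite /path_leak opprB addrC subrK. Qed.

Lemma bedge_two_preds (R : realFieldType) (V : finType) (E : rel V)
    (S : state R V) (u a b v : V) :
  a != b -> (forall z, E z v = (z == a) || (z == b)) ->
  bedge E S u v = bflow S v * pher S u v / (pher S a v + pher S b v).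
Proof. by move=> ab Ev; rewrite /bedge (big_pred2 _ ab Ev). Qed.

Section TwoPathDynamics.
Variables (R : realFieldType) (V : finType) (E : rel V) (s d : V) (q1 q2 : seq V).
Variables (l : V -> R) (delta : R) (fs bd : nat -> R).
Variables (p0 : V -> V -> R) (f0 b0 : V -> R).
Hypothesis HG : two_parallel_paths E s d q1 q2.
Hypothesis l_le1 : forall v, l v <= 1.
Hypothesis delta_gt0 : 0 < delta.
Hypothesis fs_ge0 : forall k, 0 <= fs k.
Hypothesis bd_ge0 : forall k, 0 <= bd k.
Hypothesis p0_gt0 : forall u v, E u v -> 0 < p0 u v.
Hypothesis f0_ge0 : forall v, 0 <= f0 v.
Hypothesis b0_ge0 : forall v, 0 <= b0 v.
Local Notation T := (traj E s d l delta fs bd p0 f0 b0).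
Local Notation s1 := (head d q1).
Local Notation s2 := (head d q2).
Local Notation d1 := (last s q1).
Local Notation d2 := (last s q2).

Lemma bedge_dest_share k u :
  bedge E (T k) u d = bd k * pher (T k) u d / (pher (T k) d1 d + pher (T k) d2 d).
Proof.
by rewrite (bedge_two_preds _ _ (tpp_lasts_neq HG) (tpp_dest_pred HG)) bflow_dest.
Qed.

Lemma source_ratio_next t k1 k2 : (k1 + size q1)%N = t -> (k2 + size q2)%N = t ->
  let p1 := pher (T t) s s1 in let p2 := pher (T t) s s2 in
  let f2 := fedge E (T t) s s2 in
  pher (T t.+1) s s1 / pher (T t.+1) s s2 =
  (p1 + p1 / p2 * f2 + (1 - path_leak l q1) * bedge E (T k1) d1 d)
  / (p2 + f2 + (1 - path_leak l q2) * bedge E (T k2) d2 d).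
Proof.
move=> e1 e2 p1 p2 f2.
have p2_neq0 : p2 != 0.
  by rewrite gt_eqF ?traj_pher_gt0 ?(tpp_source_succ HG) ?eqxx ?orbT.
have f_s1 : fedge E (T t) s s1 = p1 / p2 * f2.
  by apply: (mulIf p2_neq0); rewrite fedge_ratio mulrAC divfK.
have b_s1 : bedge E (T t) s s1 = (1 - path_leak l q1) * bedge E (T k1) d1 d.
  by rewrite -e1 bedge_relay_path ?path_survival //; apply: (tpp_relay_path HG).
have b_s2 : bedge E (T t) s s2 = (1 - path_leak l q2) * bedge E (T k2) d2 d.
  rewrite -e2 bedge_relay_path ?path_survival //.
  exact: (tpp_relay_path (tpp_sym HG)).
have step_s v : pher (T t.+1) s v =
    delta * (pher (T t) s v + fedge E (T t) s v + bedge E (T t) s v) by [].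
by rewrite !step_s f_s1 b_s1 b_s2 -mulf_div divff ?gt_eqF // mul1r.
Qed.

Lemma dest_bedge_ratio_bound r k1 k2 : bd k1 = bd k2 ->
  r <= pher (T k1) d1 d / pher (T k1) d2 d ->
  r <= pher (T k2) d1 d / pher (T k2) d2 d ->
  r * bedge E (T k2) d2 d <= bedge E (T k1) d1 d.
Proof.
move=> bd12 r1 r2; rewrite !bedge_dest_share bd12.
by apply: share_ratio_bound; rewrite ?traj_pher_gt0 ?(tpp_dest_pred HG) ?eqxx ?orbT.
Qed.

Lemma dest_bedge_gt0 k u : 0 < bd k -> E u d -> 0 < bedge E (T k) u d.
Proof.
move=> bdk Eud.
rewrite bedge_dest_share divr_gt0 ?mulr_gt0 ?addr_gt0 ?traj_pher_gt0 //.
  by rewrite (tpp_dest_pred HG) eqxx.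
by rewrite (tpp_dest_pred HG) eqxx orbT.
Qed.
End TwoPathDynamics.

Theorem mainTheorem7 (R : realFieldType) (V : finType) (E : rel V) (s d : V)
    (q1 q2 : seq V) (l : V -> R) (delta fbar bbar : R)
    (p0 : V -> V -> R) (f0 b0 : V -> R) (t : nat) :
  two_parallel_paths E s d q1 q2 ->
  (forall v, 0 <= l v <= 1) ->
  0 < delta < 1 ->
  0 < fbar -> 0 < bbar ->
  (forall u v, E u v -> 0 < p0 u v) ->
  (forall v, 0 <= f0 v) -> (forall v, 0 <= b0 v) ->
  path_leak l q1 < path_leak l q2 ->
  let m := (size q1).+1 in
  let n := (size q2).+1 in
  let L := maxn m n in
  let s1 := head d q1 in let s2 := head d q2 in
  let d1 := last s q1 in let d2 := last s q2 in
  let T := traj E s d l delta (fun _ => fbar) (fun _ => bbar) p0 f0 b0 in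
  let r_ss1 := fun k => pher (T k) s s1 / pher (T k) s s2 in
  let r_d1d := fun k => pher (T k) d1 d / pher (T k) d2 d in
  let r_min := rmin_window r_ss1 r_d1d L in
  (L <= t)%N ->
  let a := r_ss1 t / r_min t in
  let b2 := bedge E (T (t - n + 1)%N) d2 d in
  let beta := bedge E (T (t - m + 1)%N) d1 d / (b2 * r_min t) in
  let gamma := (a * pher (T t) s s2 + a * fedge E (T t) s s2
                  + (1 - path_leak l q1) * beta * b2)
               / (pher (T t) s s2 + fedge E (T t) s s2 + (1 - path_leak l q2) * b2) in
  [/\ r_ss1 t.+1 > r_min t,
      r_ss1 t.+1 = r_min t * gamma,
      gamma > 1, a >= 1 & beta >= 1].
Proof.
move=> HG Hl Hdelta Hf Hb Hp0 Hf0 Hb0 Hleak m n L s1 s2 d1 d2 T r_ss1 r_d1d r_min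
  HLt a b2 beta gamma.
have Hl1 v : l v <= 1 by case/andP: (Hl v).
have Hdelta0 : 0 < delta by case/andP: Hdelta.
have Hfs : forall k : nat, 0 <= (fun=> fbar) k by move=> _; exact: ltW.
have Hbd : forall k : nat, 0 <= (fun=> bbar) k by move=> _; exact: ltW.
have Hadm := traj_admissible s d Hl1 Hdelta0 Hfs Hbd Hp0 Hf0 Hb0.
have pher_gt0 k u v : E u v -> 0 < pher (T k) u v by case: (Hadm k) => Hp _ _; apply: Hp.
have [Es1 Es2] : E s s1 /\ E s s2 by rewrite !(tpp_source_succ HG) !eqxx orbT.
have [Ed1 Ed2] : E d1 d /\ E d2 d by rewrite !(tpp_dest_pred HG) !eqxx orbT.
have r_min_gt0 : 0 < r_min t.
  by apply: rmin_window_gt0 => k; rewrite divr_gt0 ?pher_gt0.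
(* The backward flows reaching [s] at time [t] entered [d] at [t - m + 1]
   along P1 and at [t - n + 1] along P2. *)
have [delay1 delay2] : (t - m + 1 + size q1)%N = t /\ (t - n + 1 + size q2)%N = t.
  by move: HLt; rewrite /L /m /n geq_max; lia.
have -> : r_ss1 t.+1 = _ :=
  source_ratio_next HG Hl1 Hdelta0 Hfs Hbd Hp0 Hf0 Hb0 delay1 delay2.
apply: ratio_decomposition => //.
- exact: pher_gt0.
- exact: fedge_ge0 (Hadm t) Es2.
- exact: dest_bedge_gt0 HG Hl1 Hdelta0 Hfs Hbd Hp0 Hf0 Hb0 _ _ Hb Ed2.
- by rewrite path_survival prodr_ge0 // => v _; rewrite subr_ge0.
- by rewrite ltrD2l ltrN2.
- exact: rmin_window_le_head.
- (* both delayed times lie in the window defining [r_min t] *)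
  apply: (dest_bedge_ratio_bound HG Hl1 Hdelta0 Hfs Hbd Hp0 Hf0 Hb0) => //.
  + by apply: rmin_window_le; move: HLt; rewrite /L /m geq_max; lia.
  + by apply: rmin_window_le; move: HLt; rewrite /L /n geq_max; lia.
Qed.
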